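(* Let $(A,v)\in\mathfrak g\times V$ satisfy $\langle A^kv,v\rangle=0$ for all integers $k\ge0$. Then: (i) if $\mathfrak g=\mathfrak u$ or $\mathfrak g=\mathfrak{sp}$, then for every $\lambda\in\mathbb{K}$ (required to satisfy $\bar\lambda=-\lambda$ in the case $\mathfrak u$) the operator $A+\lambda\phi_v$ has the same characteristic polynomial as $A$; (ii) if $\mathfrak g=\mathfrak o$, then for every $\lambda\in\mathbb{F}$ the operator $A+\lambda A\phi_v+\lambda\phi_vA$ has the same characteristic polynomial as $A$.
   Context: $\mathbb{K}=\mathbb{F}$ or a quadratic extension of a field $\mathbb{F}$ of characteristic $\neq2$, with conjugation $\lambda\mapsto\bar\lambda$. $V$ is a finite-dimensional $\mathbb{K}$-space with a non-degenerate form $\langle\cdot,\cdot\rangle$ (linear in the first variable) which is symmetric ($\mathfrak g=\mathfrak o$), Hermitian ($\mathfrak g=\mathfrak u$) or symplectic ($\mathfrak g=\mathfrak{sp}$), and $\mathfrak g=\{A:A^*=-A\}$. For $v\in V$, $\phi_v$ is the operator $u\mapsto\langle u,v\rangle v$. *)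

From HB Require Import structures.
From mathcomp Require Import all_boot all_order all_algebra.
Set Implicit Arguments. Unset Strict Implicit. Unset Printing Implicit Defensive.
Import GRing.Theory.
Local Open Scope ring_scope.

(* Vectors of V = K^n are column vectors 'cV[K]_n; the form is given by its
   Gram matrix B:  <u, w> = u^T B cj(w)  (linear in the first variable). *)
Definition bform (K : fieldType) (cj : K -> K) (n : nat) (B : 'M[K]_n)
  (u w : 'cV[K]_n) : K := (u^T *m B *m map_mx cj w) 0 0.

Definition nondeg (K : fieldType) (cj : K -> K) (n : nat) (B : 'M[K]_n) :=
  forall u : 'cV[K]_n, (forall w, bform cj B u w = 0) -> u = 0.

(* A is in g = { A : A^* = -A }, i.e. <A u, w> = - <u, A w> for all u, w. *)
Definition in_g (K : fieldType) (cj : K -> K) (n : nat) (B A : 'M[K]_n) :=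
  forall u w : 'cV[K]_n, bform cj B (A *m u) w = - bform cj B u (A *m w).

(* phi_v : u |-> <u, v> v, as a matrix: phi_v *m u = <u,v> *: v. *)
Definition phi (K : fieldType) (cj : K -> K) (n : nat) (B : 'M[K]_n)
  (v : 'cV[K]_n) : 'M[K]_n := v *m ((map_mx cj v)^T *m B^T).

Definition orth_setting (K : fieldType) (cj : K -> K) (n : nat) (B : 'M[K]_n) :=
  (forall x, cj x = x) /\ B^T = B.
Definition symp_setting (K : fieldType) (cj : K -> K) (n : nat) (B : 'M[K]_n) :=
  (forall x, cj x = x) /\ B^T = - B.
(* Unitary case: K a quadratic extension of the fixed field F of the
   (nontrivial, involutive) conjugation; Hermitian form <u,w> = cj <w,u>. *)
Definition herm_setting (K : fieldType) (cj : K -> K) (n : nat) (B : 'M[K]_n) :=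
  (exists x, cj x != x) /\ B^T = map_mx cj B.

From HB Require Import structures.
From mathcomp Require Import all_boot all_order all_algebra.
Import GRing.Theory.
Local Open Scope ring_scope.

(* Write phi_v = v w with the row vector w = v^* B^T, so that
   w x = <x, v> for every vector x; the hypothesis then reads w A^k v = 0 for
   all k.  The whole argument rests on one fact about rank-one perturbations:
     if w A^k u = 0 for all k, then A + u w has the characteristic polynomial
     of A.
   To prove it, work over {poly K} with M = X - A and p = char_poly A.  The
   matrix Q = sum_i p_i (X^i - A^i)/(X - A) satisfies M Q = p I (telescoping
   and Cayley-Hamilton) and w Q u = 0 (each quotient is a combination of the
   A^j), and a block-determinant computation gives det (M - u w) = det M.
   Cases u and sp: lam phi_v = (lam v) w is such a perturbation.
   Case o: f = phi_v satisfies f^2 = 0 and f A f = 0, so A + lam A f + lam f A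
   is conjugate under 1 + lam f to A + 2 lam A f = A + (2 lam A v) w, again a
   rank-one perturbation of the above kind. *)

Lemma det_sub_rank1 (R : idomainType) m (M Q : 'M[R]_m) (U : 'cV[R]_m)
    (W : 'rV[R]_m) :
  M *m Q = (\det M)%:M -> W *m Q *m U = 0 -> \det M != 0 ->
  \det (M - U *m W) = \det M.
Proof.
move=> MQ WQU detM_neq0; set d := \det M.
pose N := block_mx (1%:M : 'M[R]_1) W U M.
have detN : \det N = \det (M - U *m W).
  have -> : N = block_mx 1%:M 0 U 1%:M *m block_mx 1%:M W 0 (M - U *m W).
    by rewrite mulmx_block !mul1mx !mul0mx !mulmx1 ?addr0 ?add0r addrC subrK.
  by rewrite det_mulmx det_lblock det_ublock !det1 !mul1r.
have NQ : N *m block_mx (d%:M : 'M_1) 0 (- (Q *m U)) Q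
          = block_mx (d%:M : 'M_1) (W *m Q) 0 d%:M.
  rewrite mulmx_block !mul1mx !mulmx0 ?addr0 ?add0r !mulmxN mulmxA WQU subr0.
  by rewrite mulmxA MQ scalar_mxC subrr.
have detMQ : d * \det Q = d ^+ m by rewrite -det_mulmx MQ det_scalar.
have detMQ_neq0 : d * \det Q != 0 by rewrite detMQ expf_neq0.
apply: (mulIf detMQ_neq0); rewrite -detN detMQ.
have := congr1 determinant NQ.
by rewrite det_mulmx det_lblock det_ublock !det_scalar1 det_scalar detMQ.
Qed.

Section CharPolyQuotient.
(* A polynomial matrix Q with (X - A) Q = char_poly A (so Q is the adjugate of
   X - A), built explicitly as a polynomial combination of powers of A. *)

Variables (K : idomainType) (n : nat) (A : 'M[K]_n.+1).

Let Ap : 'M[{poly K}]_n.+1 := map_mx (@polyC K) A.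
Let X : 'M[{poly K}]_n.+1 := 'X%:M.

Fixpoint powdiff (k : nat) : 'M[{poly K}]_n.+1 :=
  if k is k'.+1 then X * powdiff k' + Ap ^+ k' else 0.

Lemma mul_powdiff k : (X - Ap) *m powdiff k = X ^+ k - Ap ^+ k.
Proof.
rewrite mulmxE; elim: k => [|k IH] /=; first by rewrite mulr0 !expr0 subrr.
have XAC : (X - Ap) * X = X * (X - Ap) by rewrite -!mulmxE scalar_mxC.
rewrite mulrDr mulrA XAC -mulrA IH !exprS mulrBr mulrBl.
by rewrite addrA subrK.
Qed.

Lemma powdiff_annihilated (u : 'cV[K]_n.+1) (w : 'rV[K]_n.+1) :
  (forall k, w *m A ^+ k *m u = 0) ->
  forall k, map_mx (@polyC K) w *m powdiff k *m map_mx (@polyC K) u = 0.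
Proof.
move=> wAu; elim=> [|k IH] /=; first by rewrite mulmx0 mul0mx.
rewrite mulmxDr mulmxDl -mulmxE mul_scalar_mx -scalemxAr -scalemxAl IH.
by rewrite scaler0 add0r /Ap -rmorphXn /= -!map_mxM wAu map_mx0.
Qed.

Definition char_quot : 'M[{poly K}]_n.+1 :=
  \sum_(i < size (char_poly A)) ((char_poly A)`_i)%:P *: powdiff i.

(* Cayley-Hamilton is what makes the A-parts of the telescoping sum cancel. *)
Lemma mul_char_quot : (X - Ap) *m char_quot = (char_poly A)%:M.
Proof.
set p := char_poly A.
rewrite mulmx_sumr.
under eq_bigr do rewrite -scalemxAr mul_powdiff scalerBr.
have CH : \sum_(i < size p) (p`_i)%:P *: Ap ^+ i = 0.
  rewrite -[RHS](map_mx0 (@polyC K)) -(Cayley_Hamilton A).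
  rewrite -[q in horner_mx A q]coefK poly_def linear_sum /= raddf_sum /=.
  apply: eq_bigr => i _.
  by rewrite linearZ /= rmorphXn /= horner_mx_X map_mxZ /Ap rmorphXn.
rewrite sumrB CH subr0.
under eq_bigr do rewrite /X -rmorphXn /= scale_scalar_mx mul_polyC.
by rewrite -raddf_sum /= -poly_def coefK.
Qed.

End CharPolyQuotient.

Arguments char_quot {K n} A.

Lemma char_poly_rank1 (K : idomainType) n (A : 'M[K]_n) (u : 'cV[K]_n)
    (w : 'rV[K]_n) :
  (forall k, w *m A ^+ k *m u = 0) -> char_poly (A + u *m w) = char_poly A.
Proof.
case: n A u w => [|n] A u w wAu; first by rewrite /char_poly !det_mx00.
have -> : char_poly (A + u *m w) = \det (char_poly_mx A
              - map_mx (@polyC K) u *m map_mx (@polyC K) w).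
  by rewrite /char_poly /char_poly_mx map_mxD map_mxM opprD addrA.
apply: (@det_sub_rank1 _ _ _ (char_quot A)).
- exact: mul_char_quot.
- rewrite mulmx_sumr mulmx_suml big1 // => i _.
  by rewrite -scalemxAr -scalemxAl powdiff_annihilated // scaler0.
- exact: monic_neq0 (char_poly_monic A).
Qed.

Lemma char_poly_conj (K : comNzRingType) n (P R Y : 'M[K]_n) :
  P *m R = 1%:M -> char_poly (P *m Y *m R) = char_poly Y.
Proof.
move=> PR; rewrite /char_poly /char_poly_mx.
have PXR : map_mx (@polyC K) P *m 'X%:M *m map_mx (@polyC K) R = 'X%:M.
  by rewrite scalar_mxC -mulmxA -map_mxM PR map_mx1 mulmx1.
rewrite !map_mxM -[X in X - _]PXR -mulmxBl -mulmxBr !det_mulmx mulrAC.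
by rewrite -det_mulmx -map_mxM PR map_mx1 det1 mul1r.
Qed.

Lemma square_zero_conj (R : comNzRingType) n (A f : 'M[R]_n) (lam : R) :
  f *m f = 0 -> f *m A *m f = 0 ->
  (1%:M + lam *: f) *m (1%:M - lam *: f) = 1%:M /\
  A + lam *: (A *m f) + lam *: (f *m A)
    = (1%:M + lam *: f) *m (A + (lam + lam) *: (A *m f)) *m (1%:M - lam *: f).
Proof.
move=> ff fAf; split.
  rewrite mulmxDl mul1mx -scalemxAl mulmxBr mulmx1 -scalemxAr ff.
  by rewrite scaler0 subr0 subrK.
have right_factor : (A + (lam + lam) *: (A *m f)) *m (1%:M - lam *: f)
                    = A + lam *: (A *m f).
  rewrite mulmxDl !mulmxBr !mulmx1 -!scalemxAr -scalemxAl -mulmxA ff mulmx0.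
  by rewrite !scaler0 subr0 scalerDl addrA subrK.
rewrite -mulmxA right_factor mulmxDl mul1mx -scalemxAl mulmxDr -scalemxAr.
by rewrite (mulmxA f A f) fAf !scaler0 addr0.
Qed.

Lemma char_poly_sym_perturb (K : idomainType) n (A : 'M[K]_n) (v : 'cV[K]_n)
    (w : 'rV[K]_n) (lam : K) :
  (forall k, w *m A ^+ k *m v = 0) ->
  char_poly (A + lam *: (A *m (v *m w)) + lam *: (v *m w *m A))
    = char_poly A.
Proof.
move=> wAv; set f := v *m w.
have wv : w *m v = 0 by have := wAv 0%N; rewrite expr0 mulmx1.
have wA1v : w *m (A *m v) = 0 by rewrite mulmxA -[A]expr1 wAv.
have ff : f *m f = 0 by rewrite /f mulmxA -(mulmxA v) wv mulmx0 mul0mx.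
have fAf : f *m A *m f = 0.
  by rewrite /f -!mulmxA (mulmxA A) (mulmxA w) wA1v mul0mx mulmx0.
have [PR ->] := @square_zero_conj _ _ A f lam ff fAf.
rewrite char_poly_conj // /f mulmxA scalemxAl.
apply: char_poly_rank1 => k.
rewrite -scalemxAr mulmxA -(mulmxA w) -[A ^+ k *m A]/(A ^+ k * A).
by rewrite -exprSr wAv scaler0.
Qed.

Definition form_row {K : fieldType} (cj : K -> K) {n : nat} (B : 'M[K]_n)
  (v : 'cV[K]_n) : 'rV[K]_n := (map_mx cj v)^T *m B^T.

Lemma form_rowE (K : fieldType) (cj : K -> K) n (B : 'M[K]_n) (v x : 'cV[K]_n) :
  form_row cj B v *m x = (bform cj B x v)%:M.
Proof.
rewrite [LHS]mx11_scalar /bform -[form_row _ _ _ *m x]trmxK mxE.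
by rewrite !trmx_mul !trmxK mulmxA.
Qed.

Theorem lemma6p6 (K : fieldType) (cj : {rmorphism K -> K}) (n : nat)
  (B A : 'M[K]_n) (v : 'cV[K]_n) :
  (forall x, cj (cj x) = x) ->
  (2%:R : K) != 0 ->
  nondeg cj B ->
  in_g cj B A ->
  (forall k : nat, bform cj B ((A ^+ k) *m v) v = 0) ->
  [/\ (herm_setting cj B ->
         forall lam : K, cj lam = - lam ->
           char_poly (A + lam *: phi cj B v) = char_poly A),
      (symp_setting cj B ->
         forall lam : K,
           char_poly (A + lam *: phi cj B v) = char_poly A) &
      (orth_setting cj B ->
         forall lam : K, cj lam = lam ->
           char_poly (A + lam *: (A *m phi cj B v)
                        + lam *: (phi cj B v *m A)) = char_poly A)].
Proof.
move=> _ _ _ _ isotropic.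
have phiE : phi cj B v = v *m form_row cj B v by [].
have wAv k : form_row cj B v *m A ^+ k *m v = 0.
  by rewrite -mulmxA form_rowE isotropic raddf0.
have one_sided lam : char_poly (A + lam *: phi cj B v) = char_poly A.
  rewrite phiE scalemxAl; apply: char_poly_rank1 => k.
  by rewrite -scalemxAr wAv scaler0.
split=> [_ lam _ | _ lam | _ lam _]; rewrite ?one_sided //.
by rewrite phiE char_poly_sym_perturb.
Qed.
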